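(* For all integers $k\ge0$, $$G_{(k+2)_{ab}}(q;a,b)=(1+aq)(1+bq)\,G_{k_b}(q;aq,bq),$$ and consequently $\lim_{k\to\infty}G_{k_b}(q;a,b)=(-aq;q)_\infty(-bq;q)_\infty$.
   Context: Notation: $(x;q)_\infty=\prod_{n\ge0}(1-xq^n)$. Coloured integers are $k_{ab},k_a,k_b$ for integers $k\ge1$, ordered $1_{ab}<1_a<1_b<2_{ab}<2_a<2_b<\cdots$; colours are ordered $ab<a<b$. An admissible partition is a finite (possibly empty) sequence $\lambda_1,\dots,\lambda_s$ of coloured integers, with no part $1_{ab}$, such that for $1\le i<s$, (integer of $\lambda_i$)$-$(integer of $\lambda_{i+1}$) $\ge2$ if the colour of $\lambda_i$ is $ab$ or the colour of $\lambda_i$ is smaller than the colour of $\lambda_{i+1}$, and $\ge1$ otherwise. Its weight is $a^{u}b^{v}q^{n}$ where $n$ is the sum of the integers, $u$ the number of parts of colour $a$ or $ab$, $v$ the number of parts of colour $b$ or $ab$. For a coloured integer $\kappa$ with $k\ge1$, $G_\kappa(q;a,b)$ is the sum of weights of admissible partitions with largest part $\le\kappa$; by convention $G_{0_b}(q;a,b)=1$. $G_{k_b}(q;aq,bq)$ denotes $G_{k_b}$ with $a,b$ replaced by $aq,bq$. *)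

From HB Require Import structures.
From mathcomp Require Import all_boot all_order all_algebra.
Set Implicit Arguments. Unset Strict Implicit. Unset Printing Implicit Defensive.
Import Order.TTheory GRing.Theory Num.Theory.

Inductive colour := Cab | Ca | Cb.

Definition crank (c : colour) : nat :=
  match c with Cab => 0 | Ca => 1 | Cb => 2 end.

(* A coloured integer k_c is the pair (k, c). *)
Definition cint := (nat * colour)%type.

Definition cleq (x y : cint) : bool :=
  (x.1 < y.1) || ((x.1 == y.1) && (crank x.2 <= crank y.2)).

Definition cgap (x y : cint) : nat :=
  if (crank x.2 == 0) || (crank x.2 < crank y.2) then 2 else 1.

Definition admissible (s : seq cint) : bool :=
  all (fun x => 0 < x.1) s &&
  all (fun x => ~~ ((x.1 == 1) && (crank x.2 == 0))) s &&
  sorted (fun x y => y.1 + cgap x y <= x.1) s.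

(* Finite enumeration of candidate sequences: all words of length <= k
   over the alphabet of coloured integers with integer in 1..k. *)
Fixpoint words (T : Type) (l : nat) (alph : seq T) : seq (seq T) :=
  match l with
  | 0 => [:: [::]]
  | l'.+1 => [seq x :: w | x <- alph, w <- words l' alph]
  end.

Definition alph (k : nat) : seq cint :=
  [seq (n, c) | n <- iota 1 k, c <- [:: Cab; Ca; Cb]].

Definition cands (k : nat) : seq (seq cint) :=
  flatten [seq words l (alph k) | l <- iota 0 k.+1].

Local Open Scope ring_scope.

Definition cweight (R : comNzRingType) (a b : R) (c : colour) : R :=
  match c with Cab => a * b | Ca => a | Cb => b end.

Definition pweight (R : comNzRingType) (q a b : R) (s : seq cint) : R :=
  \prod_(x <- s) (cweight a b x.2 * q ^+ x.1).

Definition G (R : comNzRingType) (q a b : R) (kappa : cint) : R :=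
  \sum_(s <- cands kappa.1 | admissible s && all (fun x => cleq x kappa) s)
     pweight q a b s.

From HB Require Import structures.
From mathcomp Require Import all_boot all_order all_algebra.
From mathcomp Require Import zify ring.
Import GRing.Theory.
Set Implicit Arguments. Unset Strict Implicit. Unset Printing Implicit Defensive.

(* Splitting off the largest part of an admissible partition gives, writing
   A_k, B_k, C_k for G_{k_a}, G_{k_b}, G_{k_ab},
     B_{k+1} = A_{k+1} + b q^{k+1} B_k,   A_{k+1} = C_{k+1} + a q^{k+1} A_k,
     C_{k+2} = B_{k+1} + a b q^{k+2} B_k.
   These recurrences alone yield C_{k+2} = (1+aq)(1+bq) B_k(aq,bq), by induction
   on k together with companion formulas expressing A_{k+1} and B_{k+1} through
   the shifted functions A_k(aq,bq), B_k(aq,bq).  Since B_{k+2} - C_{k+2} is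
   divisible by q^{k+2}, iterating the identity N times shows that B_k agrees
   with prod_{n <= N} (1+aq^n)(1+bq^n) modulo q^{N+1} once k >= 2N. *)

Definition colour_of_rank (n : nat) : colour :=
  match n with 0 => Cab | 1 => Ca | _ => Cb end.

Lemma crankK : cancel crank colour_of_rank. Proof. by case. Qed.

HB.instance Definition _ := Equality.copy colour (can_type crankK).

Lemma eq_colour_crank (c d : colour) : (c == d) = (crank c == crank d).
Proof. by []. Qed.

Lemma mem_words (T : eqType) (A : seq T) l s :
  (s \in words l A) = (size s == l) && all (mem A) s.
Proof.
elim: l s => [|l IH] [|y t] //=.
  by apply/negP => /flatten_mapP [x _] /mapP [w _].
rewrite eqSS; apply/flatten_mapP/idP.
- case=> x xA /mapP [w + [-> ->]]; rewrite IH => /andP [/eqP -> ->].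
  by rewrite eqxx xA.
- case/andP => /eqP st /andP [yA tA]; exists y => //; apply/mapP; exists t => //.
  by rewrite IH st eqxx.
Qed.

Lemma uniq_words (T : eqType) (A : seq T) l : uniq A -> uniq (words l A).
Proof.
move=> uA; elim: l => [|l IH] //=.
by apply: allpairs_uniq => // [[x1 w1] [x2 w2]] _ _ [-> ->].
Qed.

Lemma mem_alph k (x : cint) : (x \in alph k) = (0 < x.1 <= k).
Proof.
case: x => n c; apply/allpairsP/idP => [[[m d]] /= [+ _ [-> _]]|/= nk].
  by rewrite mem_iota; lia.
by exists (n, c); split => //=; [rewrite mem_iota; lia | case: c].
Qed.

Lemma uniq_alph k : uniq (alph k).
Proof.
by apply: allpairs_uniq => //; [exact: iota_uniq | move=> [? ?] [? ?] _ _ [-> ->]].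
Qed.

Lemma mem_cands k s : (s \in cands k) = (size s <= k) && all (mem (alph k)) s.
Proof.
apply/flatten_mapP/idP => [[l]|/andP [sk sA]].
  by rewrite mem_iota mem_words => lk /andP [/eqP -> ->]; rewrite andbT; lia.
by exists (size s); rewrite ?mem_iota ?mem_words ?eqxx //=; lia.
Qed.

Lemma uniq_cands k : uniq (cands k).
Proof.
rewrite /cands; elim: k.+1 0 => [|n IH] m //=.
rewrite cat_uniq uniq_words ?uniq_alph // IH andbT.
apply/hasPn => s /flatten_mapP [l]; rewrite mem_iota !mem_words => ml.
by case/andP=> /eqP sl _; apply/negP => /andP [/eqP sm _]; lia.
Qed.

Definition admissible_le (kappa : cint) (s : seq cint) : bool :=
  admissible s && all (fun x => cleq x kappa) s.

Definition cint_gt (x y : cint) : bool := y.1 < x.1.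

Lemma cint_gt_trans : transitive cint_gt.
Proof. by move=> x y z; rewrite /cint_gt; lia. Qed.

Lemma admissible_sorted s : admissible s -> sorted cint_gt s.
Proof.
case/andP => _; apply: sub_sorted => x y; rewrite /cint_gt /cgap.
by case: ifP; lia.
Qed.

Lemma admissible_cons y t : admissible (y :: t) =
  [&& 0 < y.1, ~~ ((y.1 == 1) && (crank y.2 == 0)), admissible t &
      if t is z :: _ then z.1 + cgap y z <= y.1 else true].
Proof.
rewrite /admissible /=; case: t => [|z t] /=; first by rewrite !andbT.
by case: (0 < y.1); case: (0 < z.1); case: (all _ t); case: (~~ _); case: (~~ _);
  case: (all _ t); case: (_ <= y.1); case: (path _ _ _).
Qed.

Lemma cleq_int x k : cleq x k -> x.1 <= k.1.
Proof. by case/orP => [|/andP [/eqP -> _]]; lia. Qed.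

Lemma cleq_refl x : cleq x x.
Proof. by rewrite /cleq eqxx leqnn orbT. Qed.

Lemma admissible_le_cons k y t :
  admissible_le k (y :: t) = admissible (y :: t) && cleq y k.
Proof.
rewrite /admissible_le /=; apply/idP/idP => [/and3P [-> -> _] //|/andP [ys yk]].
rewrite ys yk; apply/allP => z zt.
have /allP/(_ z zt) := order_path_min cint_gt_trans (admissible_sorted ys).
by move: (cleq_int yk); rewrite /cint_gt /cleq; lia.
Qed.

Lemma admissible_le_mem_cands k s : admissible_le k s -> s \in cands k.1.
Proof.
case/andP => adm_s /allP le_k.
have /andP [/andP [pos _] _] := adm_s.
have s_alph : all (mem (alph k.1)) s.
  by apply/allP => x xs; rewrite /= mem_alph (allP pos x xs) cleq_int ?le_k.
rewrite mem_cands s_alph andbT.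
have uniq_ints : uniq (map fst s).
  apply: (@sorted_uniq _ gtn); [by move=> ? ? ? /=; lia | exact: ltnn |].
  by rewrite sorted_map; exact: admissible_sorted adm_s.
rewrite -(size_map fst) -(size_iota 1 k.1).
apply: uniq_leq_size uniq_ints _ => _ /mapP [x xs ->].
by rewrite mem_iota (allP pos x xs) /=; move: (cleq_int (le_k x xs)); lia.
Qed.

Local Open Scope ring_scope.

Lemma big_uniq_eq_mem (R : nmodType) (T : eqType) (r1 r2 : seq T) (P1 P2 : pred T)
    (F : T -> R) :
  uniq r1 -> uniq r2 -> (forall x, (x \in r1) && P1 x = (x \in r2) && P2 x) ->
  \sum_(x <- r1 | P1 x) F x = \sum_(x <- r2 | P2 x) F x.
Proof.
move=> u1 u2 eq12; rewrite -big_filter -[RHS]big_filter; apply: perm_big.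
apply: uniq_perm; rewrite ?filter_uniq // => x.
by rewrite !mem_filter andbC eq12 andbC.
Qed.

Section RemoveLargestPart.
Variables (R : comNzRingType) (q a b : R).

Lemma G_E kappa :
  G q a b kappa = \sum_(s <- cands kappa.1 | admissible_le kappa s) pweight q a b s.
Proof. by []. Qed.

Lemma sum_G_head_neq (top prev : cint) :
    (forall z, cleq z top && (z != top) = cleq z prev) ->
  \sum_(s <- cands top.1 | admissible_le top s && (ohead s != Some top))
     pweight q a b s = G q a b prev.
Proof.
move=> le_prev.
have adm_prev s : admissible_le top s && (ohead s != Some top) = admissible_le prev s.
  by case: s => [|y t] //=; rewrite !admissible_le_cons -andbA le_prev.
rewrite G_E; apply: big_uniq_eq_mem; rewrite ?uniq_cands // => s.
rewrite adm_prev; case ps: (admissible_le prev s); rewrite ?andbF // !andbT.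
have /andP [ts _] : admissible_le top s && (ohead s != Some top) by rewrite adm_prev.
by rewrite !admissible_le_mem_cands.
Qed.

Lemma sum_G_head_eq (top tail : cint) :
    (0 < top.1)%N && ~~ ((top.1 == 1)%N && (crank top.2 == 0)%N) ->
    (forall z, (z.1 + cgap top z <= top.1)%N = cleq z tail) ->
  \sum_(s <- cands top.1 | admissible_le top s && (ohead s == Some top))
     pweight q a b s = cweight a b top.2 * q ^+ top.1 * G q a b tail.
Proof.
move=> top_ok le_tail.
have adm_tail t : admissible_le top (top :: t) = admissible_le tail t.
  rewrite admissible_le_cons cleq_refl andbT admissible_cons andbA top_ok /=.
  by case: t => [|z t]; rewrite ?admissible_le_cons ?le_tail.
have mem_cons_tail s :
    (s \in cands top.1) && (admissible_le top s && (ohead s == Some top)) =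
    (s \in map (cons top) (cands tail.1)) && admissible_le tail (behead s).
  case: s => [|y t].
    by apply/idP/idP => [/and3P [_ _ /eqP //]|/andP [/mapP [? _] //]].
  rewrite [ohead _]/= [behead _]/=; have [->|ne] := eqVneq y top.
    rewrite mem_map => [|? ? []] //; rewrite eqxx andbT adm_tail.
    case ts: (admissible_le tail t); rewrite ?andbF // !andbT.
    by rewrite !admissible_le_mem_cands ?adm_tail.
  have -> : (Some y == Some top) = false by apply/negbTE.
  rewrite !andbF; apply/esym/negbTE.
  by apply/negP => /andP [/mapP [t' _ [y_top _]]]; rewrite y_top eqxx in ne.
rewrite (big_uniq_eq_mem _ (uniq_cands _) _ mem_cons_tail); last first.
  by rewrite map_inj_uniq ?uniq_cands // => ? ? [].
by rewrite big_map big_distrr; apply: eq_bigr => s _; rewrite /pweight big_cons.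
Qed.

Lemma G_split_top (top prev tail : cint) :
    (0 < top.1)%N && ~~ ((top.1 == 1)%N && (crank top.2 == 0)%N) ->
    (forall z, cleq z top && (z != top) = cleq z prev) ->
    (forall z, (z.1 + cgap top z <= top.1)%N = cleq z tail) ->
  G q a b top = G q a b prev + cweight a b top.2 * q ^+ top.1 * G q a b tail.
Proof.
move=> top_ok le_prev le_tail.
rewrite G_E (bigID (fun s => ohead s == Some top)) /= addrC.
by rewrite (sum_G_head_neq le_prev) (sum_G_head_eq top_ok le_tail).
Qed.

End RemoveLargestPart.

Ltac cint_order :=
  case=> ? []; rewrite /cleq /cgap ?xpair_eqE ?eq_colour_crank /=; apply/idP/idP; lia.

Section Recurrences.
Variables (R : comNzRingType) (q a b : R).

Lemma G_Cb_rec k :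
  G q a b (k.+1, Cb) = G q a b (k.+1, Ca) + b * q ^+ k.+1 * G q a b (k, Cb).
Proof.
by rewrite (@G_split_top _ _ _ _ _ (k.+1, Ca) (k, Cb)) ?andbF //; cint_order.
Qed.

Lemma G_Ca_rec k :
  G q a b (k.+1, Ca) = G q a b (k.+1, Cab) + a * q ^+ k.+1 * G q a b (k, Ca).
Proof.
by rewrite (@G_split_top _ _ _ _ _ (k.+1, Cab) (k, Ca)) ?andbF //; cint_order.
Qed.

Lemma G_Cab_rec k :
  G q a b (k.+2, Cab) = G q a b (k.+1, Cb) + a * b * q ^+ k.+2 * G q a b (k, Cb).
Proof.
by rewrite (@G_split_top _ _ _ _ _ (k.+1, Cb) (k, Cb)) //; cint_order.
Qed.

Lemma G_0 c : G q a b (0, c) = 1.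
Proof. by rewrite /G /cands /= big_cons big_nil /= /pweight big_nil addr0. Qed.

Lemma G_1ab : G q a b (1, Cab) = 1.
Proof. by rewrite /G /cands /= !big_cons big_nil /= /pweight big_nil !addr0. Qed.

(* [G_{(j-1)_b}], with the value [0] for [j = 0] making [G_Cab_recS] uniform. *)
Definition G_Cb_pred (j : nat) : R := if j is j'.+1 then G q a b (j', Cb) else 0.

Lemma G_Cab_recS k :
  G q a b (k.+1, Cab) = G q a b (k, Cb) + a * b * q ^+ k.+1 * G_Cb_pred k.
Proof. by case: k => [|k]; rewrite ?G_Cab_rec // G_1ab G_0 mulr0 addr0. Qed.

End Recurrences.

Section ShiftIdentities.
Variables (R : comNzRingType) (q a b : R).
Local Notation A k := (G q a b (k, Ca)).
Local Notation B k := (G q a b (k, Cb)).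
Local Notation C k := (G q a b (k, Cab)).
Local Notation A' k := (G q (a * q) (b * q) (k, Ca)).
Local Notation B' k := (G q (a * q) (b * q) (k, Cb)).
Local Notation B'_pred k := (G_Cb_pred q (a * q) (b * q) k).

Lemma G_shift_identities j :
  [/\ B j.+1 = (1 + b * q) * B' j + a * q * A' j + a * b * q ^+ 2 * B'_pred j,
      A j.+1 = (1 + a * q) * (A' j + b * q * B'_pred j)
    & C j.+2 = (1 + a * q) * (1 + b * q) * B' j].
Proof.
elim: j => [|j [shiftB shiftA shiftC]].
  by split; rewrite ?G_Cab_rec ?G_Cb_rec G_Ca_rec G_Cab_recS /= !G_0; ring.
have eA' : A' j.+1 = B' j + a * q * (b * q) * q ^+ j.+1 * B'_pred j
                     + a * q * q ^+ j.+1 * A' j by rewrite G_Ca_rec G_Cab_recS.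
have eB' : B' j.+1 = A' j.+1 + b * q * q ^+ j.+1 * B' j by rewrite G_Cb_rec.
have shiftA' : A j.+2 = (1 + a * q) * (A' j.+1 + b * q * B'_pred j.+1).
  by rewrite G_Ca_rec shiftC shiftA /= eA' !exprS; ring.
split=> //.
  by rewrite G_Cb_rec shiftA' shiftB /= eB' eA' !exprS; ring.
by rewrite G_Cab_rec G_Cb_rec shiftA' shiftB /= eB' eA' !exprS; ring.
Qed.

End ShiftIdentities.

Definition qpoch_ab (R : comNzRingType) (q a b : R) (N : nat) : R :=
  \prod_(1 <= n < N.+1) ((1 + a * q ^+ n) * (1 + b * q ^+ n)).

Lemma qpoch_abS (R : comNzRingType) (q a b : R) N :
  qpoch_ab q a b N.+1 = (1 + a * q) * (1 + b * q) * qpoch_ab q (a * q) (b * q) N.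
Proof.
rewrite /qpoch_ab big_nat_recl // expr1; congr (_ * _).
by apply: eq_bigr => i _; rewrite exprS; ring.
Qed.

Lemma G_Cb_sub1 (R : comNzRingType) (q a b : R) k :
  exists c1 c2, G q a b (k, Cb) - 1 = q * (a * c1 + b * c2).
Proof.
elim: k => [|k [c1 [c2 IH]]]; first by exists 0, 0; rewrite G_0; ring.
exists (c1 + q ^+ k * (b * G_Cb_pred q a b k + G q a b (k, Ca))),
       (c2 + q ^+ k * G q a b (k, Cb)).
by rewrite G_Cb_rec G_Ca_rec G_Cab_recS -[G q a b (k, Cb)](subrK 1) IH !exprS; ring.
Qed.

(* The error stays in the ideal (a, b): replacing a, b by aq, bq then supplies
   the extra factor q needed at the next step. *)
Lemma G_Cb_sub_qpoch_ab N k : (2 * N <= k)%N ->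
  forall (R : comNzRingType) (q a b : R), exists c1 c2,
    G q a b (k, Cb) - qpoch_ab q a b N = q ^+ N.+1 * (a * c1 + b * c2).
Proof.
elim: N k => [|N IH] k le_k R q a b.
  have [c1 [c2 eq1]] := G_Cb_sub1 q a b k.
  by exists c1, c2; rewrite /qpoch_ab big_geq // eq1 expr1.
have [m def_k] : exists m, k = (m + N).+2 by exists (k - N.+2)%N; lia.
have [c1 [c2 eqN]] := IH (m + N)%N ltac:(lia) R q (a * q) (b * q).
have [_ _ shiftC] := G_shift_identities q a b (m + N).
exists ((1 + a * q) * (1 + b * q) * c1 + q ^+ m * G q a b ((m + N).+1, Ca)),
       ((1 + a * q) * (1 + b * q) * c2 + q ^+ m * G q a b ((m + N).+1, Cb)).
rewrite def_k G_Cb_rec G_Ca_rec shiftC qpoch_abS.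
rewrite -[G q (a * q) (b * q) _](subrK (qpoch_ab q (a * q) (b * q) N)) eqN.
by rewrite !exprS exprD; ring.
Qed.

Theorem mainTheorem5 :
  (forall (R : comNzRingType) (k : nat) (q a b : R),
      G q a b (k.+2, Cab) = (1 + a * q) * (1 + b * q) * G q (a * q) (b * q) (k, Cb))
  /\
  (forall N : nat, exists K : nat, forall k : nat, (K <= k)%N ->
     forall (R : comNzRingType) (q a b : R), exists c : R,
       G q a b (k, Cb)
       - \prod_(1 <= n < N.+1) ((1 + a * q ^+ n) * (1 + b * q ^+ n))
       = q ^+ N.+1 * c).
Proof.
split=> [R k q a b | N]; first by have [] := G_shift_identities q a b k.
exists (2 * N)%N => k le_k R q a b.
have [c1 [c2 err]] := G_Cb_sub_qpoch_ab le_k q a b.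
by exists (a * c1 + b * c2).
Qed.
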